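(* Let $(A\mid R)$ be a finite presentation. Then either $(A\mid R)$ is firstly irreducible, or there is a finite sequence of presentations $(A\mid R)\leadsto_1(A_1\mid R_1)\leadsto_1\cdots\leadsto_1(A_n\mid R_n)$ in which each step is one of the transformations (I)–(III) and $(A_n\mid R_n)$ is firstly irreducible.
   Context: $\mathbb{M}_A$ is the free magma on a non-empty set $A$ (non-associative words with $x+y=(x,y)$); $\mathbb{M}_A^2$ has componentwise operation. A finite presentation is $(A\mid R)$ with $A$ finite non-empty and $R\subseteq\mathbb{M}_A^2$ finite. $\mathcal{G}(\mathbb{M}_A^2)=(A\times\mathbb{M}_A)\cup(\mathbb{M}_A\times A)$. For $p\in\mathbb{M}_A^2$, $\mathbf{g}(p)=\mathbf{g}(p_1)\cup\mathbf{g}(p_2)$ if $p=p_1+p_2$ with $p_1,p_2\in\mathbb{M}_A^2$, and $\mathbf{g}(p)=\{p\}$ otherwise; $\mathbf{g}(S)=\bigcup_{p\in S}\mathbf{g}(p)$. The transformations are: (I) if some $(x,y)\in R$ is not in $\mathcal{G}(\mathbb{M}_A^2)$, replace $(A\mid R)$ by $(A\mid\mathbf{g}(R))$. (II) if $(a,y),(a,y')\in R\cap(A\times(\mathbb{M}_A\setminus A))$ with $y\neq y'$, replace by $(A\mid (R\setminus\{(a,y')\})\cup\mathbf{g}((y,y')))$. (III) if $(x,b),(x',b)\in R\cap((\mathbb{M}_A\setminus A)\times A)$ with $x\neq x'$, replace by $(A\mid (R\setminus\{(x',b)\})\cup\mathbf{g}((x,x')))$. A presentation is firstly irreducible if none of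 (I)–(III) is applicable; $\leadsto_1$ denotes application of one of (I)–(III). *)

From Stdlib Require Import List.

Set Implicit Arguments.

(* The free magma M_A on A: non-associative words; op x y = (x,y) = x + y. *)
Inductive magma (A : Type) : Type :=
| gen : A -> magma A
| op : magma A -> magma A -> magma A.

Arguments gen {A} _.
Arguments op {A} _ _.

Definition pair (A : Type) := (magma A * magma A)%type.
Definition rels (A : Type) := pair A -> Prop.

Definition finite_set (T : Type) (S : T -> Prop) : Prop :=
  exists l : list T, forall t, S t <-> In t l.

Definition is_gen (A : Type) (x : magma A) : Prop := exists a, x = gen a.

Definition inG (A : Type) (p : pair A) : Prop := is_gen (fst p) \/ is_gen (snd p).

(* g(p): p = p1 + p2 in M_A^2 iff both components are products. *)
Fixpoint gpair (A : Type) (x y : magma A) : rels A :=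
  match x, y with
  | op x1 x2, op y1 y2 => fun q => gpair x1 y1 q \/ gpair x2 y2 q
  | _, _ => fun q => q = (x, y)
  end.

Definition g (A : Type) (p : pair A) : rels A := gpair (fst p) (snd p).

Definition gset (A : Type) (S : rels A) : rels A := fun q => exists p, S p /\ g p q.

Definition applicable_I (A : Type) (R : rels A) : Prop :=
  exists p, R p /\ ~ inG p.

Definition applicable_II (A : Type) (R : rels A) (a : A) (y y' : magma A) : Prop :=
  R (gen a, y) /\ R (gen a, y') /\ ~ is_gen y /\ ~ is_gen y' /\ y <> y'.

Definition applicable_III (A : Type) (R : rels A) (b : A) (x x' : magma A) : Prop :=
  R (x, gen b) /\ R (x', gen b) /\ ~ is_gen x /\ ~ is_gen x' /\ x <> x'.

(* One step (A|R) ~>_1 (A|R'); the generating set A is unchanged by (I)-(III). *)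
Definition step1 (A : Type) (R R' : rels A) : Prop :=
  (applicable_I R /\ R' = gset R)
  \/ (exists a y y', applicable_II R a y y' /\
        R' = (fun q => (R q /\ q <> (gen a, y')) \/ g (y, y') q))
  \/ (exists b x x', applicable_III R b x x' /\
        R' = (fun q => (R q /\ q <> (x', gen b)) \/ g (x, x') q)).

Definition firstly_irreducible (A : Type) (R : rels A) : Prop :=
  ~ applicable_I R
  /\ (forall a y y', ~ applicable_II R a y y')
  /\ (forall b x x', ~ applicable_III R b x x').

(* Weigh a relation (x, y) by 2 ^ max(|x|, |y|), where |.| counts the nodes of a
   word, and a presentation by the sum of the weights of its relations.  Both
   halves of a pair of products are at least two nodes shorter than the pair, so
   g((x1 + x2, y1 + y2)) weighs at most half as much as the pair itself.  After one
   use of (I) every relation lies in G(M_A^2), and this persists.  A step (II) that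
   removes the longer of y, y' replaces (a, y'), of weight 2 ^ |y'|, by g((y, y')),
   of weight below 2 ^ |y'|; symmetrically for (III).  So the weight strictly
   decreases and the reduction terminates. *)

From Stdlib Require Import List Lia Arith Wf_nat Classical.
Import ListNotations.

Set Implicit Arguments.
Unset Strict Implicit.

Section Reduction.
Variable A : Type.

Fixpoint magma_size (x : magma A) : nat :=
  match x with
  | gen _ => 1
  | op x1 x2 => S (magma_size x1 + magma_size x2)
  end.

Lemma magma_size_pos (x : magma A) : 1 <= magma_size x.
Proof. destruct x; simpl; lia. Qed.

Definition weight (p : pair A) : nat :=
  2 ^ Nat.max (magma_size (fst p)) (magma_size (snd p)).

Definition list_weight (l : list (pair A)) : nat := list_sum (map weight l).

Lemma weight_pos (p : pair A) : 0 < weight p.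
Proof. apply Nat.neq_0_lt_0, Nat.pow_nonzero; lia. Qed.

Lemma list_weight_cons (p : pair A) (l : list (pair A)) :
  list_weight (p :: l) = weight p + list_weight l.
Proof. reflexivity. Qed.

Lemma list_weight_app (l1 l2 : list (pair A)) :
  list_weight (l1 ++ l2) = list_weight l1 + list_weight l2.
Proof. unfold list_weight; rewrite map_app; apply list_sum_app. Qed.

Lemma weight_op_split (x1 x2 y1 y2 : magma A) :
  2 * (weight (x1, y1) + weight (x2, y2)) <= weight (op x1 x2, op y1 y2).
Proof.
  unfold weight; simpl fst; simpl snd.
  set (m1 := Nat.max (magma_size x1) (magma_size y1)).
  set (m2 := Nat.max (magma_size x2) (magma_size y2)).
  set (M := Nat.max (magma_size (op x1 x2)) (magma_size (op y1 y2))).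
  assert (HM : Nat.max m1 m2 + 2 <= M).
  { pose proof (magma_size_pos x1); pose proof (magma_size_pos x2).
    pose proof (magma_size_pos y1); pose proof (magma_size_pos y2).
    unfold m1, m2, M; simpl; lia. }
  pose proof (Nat.pow_le_mono_r 2 _ _ ltac:(lia) HM) as HpM.
  pose proof (Nat.pow_le_mono_r 2 _ _ ltac:(lia) (Nat.le_max_l m1 m2)).
  pose proof (Nat.pow_le_mono_r 2 _ _ ltac:(lia) (Nat.le_max_r m1 m2)).
  rewrite Nat.pow_add_r in HpM; change (2 ^ 2) with 4 in HpM; lia.
Qed.

Lemma weight_le_gen_l (a : A) (y y' : magma A) :
  magma_size y <= magma_size y' -> weight (y, y') <= weight (gen a, y').
Proof.
  intros Hle; apply Nat.pow_le_mono_r; cbn [fst snd magma_size]; pose proof (magma_size_pos y'); lia.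
Qed.

Lemma weight_le_gen_r (b : A) (x x' : magma A) :
  magma_size x <= magma_size x' -> weight (x, x') <= weight (x', gen b).
Proof.
  intros Hle; apply Nat.pow_le_mono_r; cbn [fst snd magma_size]; pose proof (magma_size_pos x'); lia.
Qed.

Fixpoint glist (x y : magma A) : list (pair A) :=
  match x, y with
  | op x1 x2, op y1 y2 => glist x1 y1 ++ glist x2 y2
  | _, _ => [(x, y)]
  end.

Lemma gpair_glist (x y : magma A) (q : pair A) : gpair x y q <-> In q (glist x y).
Proof.
  revert y; induction x; intros y; destruct y; simpl; try (intuition congruence).
  rewrite in_app_iff, IHx1, IHx2; tauto.
Qed.

Lemma gpair_inG (x y : magma A) (q : pair A) : gpair x y q -> inG q.
Proof.
  revert y; induction x; intros y; destruct y; simpl; intros Hq;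
    try (subst; unfold inG, is_gen; simpl; eauto; fail).
  destruct Hq; eauto.
Qed.

Lemma list_weight_glist (x y : magma A) : list_weight (glist x y) <= weight (x, y).
Proof.
  revert y; induction x as [|x1 IH1 x2 IH2]; intros y; destruct y as [|y1 y2];
    try (cbn [glist]; rewrite list_weight_cons; cbn; lia).
  cbn [glist]; rewrite list_weight_app.
  pose proof (IH1 y1); pose proof (IH2 y2); pose proof (weight_op_split x1 x2 y1 y2); lia.
Qed.

Lemma list_weight_glist_lt (u u' : magma A) :
  ~ is_gen u -> ~ is_gen u' -> list_weight (glist u u') < weight (u, u').
Proof.
  intros Hu Hu'.
  destruct u as [c|x1 x2]; [exfalso; apply Hu; exists c; reflexivity|].
  destruct u' as [c|y1 y2]; [exfalso; apply Hu'; exists c; reflexivity|].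
  cbn [glist]; rewrite list_weight_app.
  pose proof (list_weight_glist x1 y1); pose proof (list_weight_glist x2 y2).
  pose proof (weight_op_split x1 x2 y1 y2); pose proof (weight_pos (x1, y1)); lia.
Qed.

Lemma remove_list_weight (l : list (pair A)) (p : pair A) : In p l ->
  exists l', (forall t, In t l' <-> In t l /\ t <> p)
             /\ list_weight l' + weight p <= list_weight l.
Proof.
  induction l as [|q l IH]; [intros []|intros Hp].
  destruct (classic (In p l)) as [Hl|Hl].
  - destruct (IH Hl) as [l' [Hl' Hw]].
    destruct (classic (q = p)) as [<-|Hqp].
    + exists l'; split; [|rewrite !list_weight_cons; lia].
      intros t; rewrite Hl'; simpl; intuition congruence.
    + exists (q :: l'); split; [|rewrite !list_weight_cons; lia].
      intros t; simpl; rewrite Hl'; intuition congruence.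
  - destruct Hp as [<-|]; [|contradiction].
    exists l; split; [|rewrite !list_weight_cons; lia].
    intros t; simpl; intuition congruence.
Qed.

Definition enumerates (l : list (pair A)) (R : rels A) : Prop :=
  forall t, R t <-> In t l.

Definition rels_inG (R : rels A) : Prop := forall t, R t -> inG t.

Definition replace_by_g (R : rels A) (p u : pair A) : rels A :=
  fun q => (R q /\ q <> p) \/ g u q.

Lemma replace_by_g_decreases (R : rels A) (l : list (pair A)) (p : pair A)
    (u u' : magma A) :
  enumerates l R -> rels_inG R -> R p -> ~ is_gen u -> ~ is_gen u' ->
  weight (u, u') <= weight p ->
  exists l', enumerates l' (replace_by_g R p (u, u'))
             /\ rels_inG (replace_by_g R p (u, u'))
             /\ list_weight l' < list_weight l.
Proof.
  intros Hl HG Hp Hu Hu' Hw.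
  destruct (remove_list_weight (proj1 (Hl p) Hp)) as [l1 [Hl1 Hw1]].
  exists (l1 ++ glist u u'); split; [|split].
  - intros t; unfold replace_by_g, g, enumerates in *; simpl.
    rewrite in_app_iff, Hl1, <- Hl, <- gpair_glist; tauto.
  - intros t [[Ht _]|Ht]; [exact (HG t Ht)|exact (gpair_inG Ht)].
  - rewrite list_weight_app; pose proof (list_weight_glist_lt Hu Hu'); lia.
Qed.

Lemma applicable_II_ordered (R : rels A) (a : A) (y y' : magma A) :
  applicable_II R a y y' ->
  exists z z', applicable_II R a z z' /\ magma_size z <= magma_size z'.
Proof.
  intros Hap; destruct (le_lt_dec (magma_size y) (magma_size y')).
  - exists y, y'; auto.
  - exists y', y; split; [|lia].
    destruct Hap as [? [? [? [? ?]]]]; repeat split; auto.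
Qed.

Lemma applicable_III_ordered (R : rels A) (b : A) (x x' : magma A) :
  applicable_III R b x x' ->
  exists z z', applicable_III R b z z' /\ magma_size z <= magma_size z'.
Proof.
  intros Hap; destruct (le_lt_dec (magma_size x) (magma_size x')).
  - exists x, x'; auto.
  - exists x', x; split; [|lia].
    destruct Hap as [? [? [? [? ?]]]]; repeat split; auto.
Qed.

Lemma reducible_inG_applicable (R : rels A) :
  rels_inG R -> ~ firstly_irreducible R ->
  (exists a y y', applicable_II R a y y') \/ (exists b x x', applicable_III R b x x').
Proof.
  intros HG Hred; apply NNPP; intros Hn; apply Hred; repeat split.
  - intros [p [Hp Hnp]]; exact (Hnp (HG p Hp)).
  - intros a y y' Hap; apply Hn; left; eauto.
  - intros b x x' Hap; apply Hn; right; eauto.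
Qed.

Lemma reducible_step_decreases (R : rels A) (l : list (pair A)) :
  enumerates l R -> rels_inG R -> ~ firstly_irreducible R ->
  exists R' l', step1 R R' /\ enumerates l' R' /\ rels_inG R'
                /\ list_weight l' < list_weight l.
Proof.
  intros Hl HG Hred.
  destruct (reducible_inG_applicable HG Hred) as [[a [y0 [y0' Hap0]]] | [b [x0 [x0' Hap0]]]].
  - destruct (applicable_II_ordered Hap0) as [y [y' [Hap Hle]]].
    pose proof Hap as [_ [Hy' [Hny [Hny' _]]]].
    destruct (replace_by_g_decreases Hl HG Hy' Hny Hny' (weight_le_gen_l a Hle))
      as [l' [Hl' [HG' Hw]]].
    exists (replace_by_g R (gen a, y') (y, y')), l'; split; [|auto].
    right; left; exists a, y, y'; auto.
  - destruct (applicable_III_ordered Hap0) as [x [x' [Hap Hle]]].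
    pose proof Hap as [_ [Hx' [Hnx [Hnx' _]]]].
    destruct (replace_by_g_decreases Hl HG Hx' Hnx Hnx' (weight_le_gen_r b Hle))
      as [l' [Hl' [HG' Hw]]].
    exists (replace_by_g R (x', gen b) (x, x')), l'; split; [|auto].
    right; right; exists b, x, x'; auto.
Qed.

Definition reduces_to_irreducible (R : rels A) : Prop :=
  exists (n : nat) (Rs : nat -> rels A),
    1 <= n /\ Rs 0 = R /\
    (forall i, i < n -> step1 (Rs i) (Rs (S i))) /\
    firstly_irreducible (Rs n).

Lemma reduces_to_irreducible_step (R R' : rels A) :
  step1 R R' -> firstly_irreducible R' \/ reduces_to_irreducible R' ->
  reduces_to_irreducible R.
Proof.
  intros Hst [Hirr | [n [Rs [Hn [H0 [Hsteps Hirr]]]]]].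
  - exists 1, (fun i => match i with 0 => R | _ => R' end).
    split; [lia|split; [reflexivity|split; [|exact Hirr]]].
    intros [|i] Hi; [exact Hst|lia].
  - exists (S n), (fun i => match i with 0 => R | S j => Rs j end).
    split; [lia|split; [reflexivity|split; [|exact Hirr]]].
    intros [|i] Hi; [rewrite H0; exact Hst|apply Hsteps; lia].
Qed.

Lemma inG_reduces_to_irreducible (l : list (pair A)) (R : rels A) :
  enumerates l R -> rels_inG R ->
  firstly_irreducible R \/ reduces_to_irreducible R.
Proof.
  revert R; induction l as [l IH] using (induction_ltof1 _ list_weight).
  intros R Hl HG.
  destruct (classic (firstly_irreducible R)) as [Hirr|Hred]; [left; exact Hirr|right].
  destruct (reducible_step_decreases Hl HG Hred) as [R' [l' [Hst [Hl' [HG' Hw]]]]].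
  exact (reduces_to_irreducible_step Hst (IH l' Hw R' Hl' HG')).
Qed.

Lemma gset_enumerates (l : list (pair A)) (R : rels A) :
  enumerates l R -> enumerates (flat_map (fun p => glist (fst p) (snd p)) l) (gset R).
Proof.
  intros Hl t; rewrite in_flat_map; unfold gset, g, enumerates in *.
  split; intros [p [Hp Ht]]; exists p; rewrite Hl, gpair_glist in *; auto.
Qed.

Lemma gset_inG (R : rels A) : rels_inG (gset R).
Proof. intros t [p [_ Ht]]; exact (gpair_inG Ht). Qed.

Lemma applicable_I_of_not_inG (R : rels A) : ~ rels_inG R -> applicable_I R.
Proof.
  intros HnG; apply NNPP; intros HnI; apply HnG; intros t Ht.
  apply NNPP; intros Hnt; apply HnI; exists t; auto.
Qed.

End Reduction.

Theorem lemma7p9 (A : Type) (HAfin : finite_set (fun _ : A => True))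
  (HAne : inhabited A) (R : rels A) (HR : finite_set R) :
  firstly_irreducible R \/
  exists (n : nat) (Rs : nat -> rels A),
    1 <= n /\ Rs 0 = R /\
    (forall i, i < n -> step1 (Rs i) (Rs (S i))) /\
    firstly_irreducible (Rs n).
Proof.
  destruct HR as [l Hl].
  destruct (classic (rels_inG R)) as [HG|HnG].
  - exact (inG_reduces_to_irreducible Hl HG).
  - right; apply (@reduces_to_irreducible_step A R (gset R)).
    + left; split; [exact (applicable_I_of_not_inG HnG)|reflexivity].
    + exact (inG_reduces_to_irreducible (gset_enumerates Hl) (gset_inG (R:=R))).
Qed.
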